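(* Let $L$ be a positive definite lattice with $\operatorname{rank} L\geq 4$ and let $\mathcal{A}_{a,m}$ be an admissible arithmetic progression. If $\mathcal{A}_{a,m}\subseteq Q(\operatorname{gen} L)$, then $\mathcal{A}_{a,m}\cap Q(L)\neq\emptyset$.
   Context: A lattice is a finitely generated $\mathbb{Z}$-submodule $L$ of a finite-dimensional quadratic space $(V,Q)$ over $\mathbb{Q}$, with associated symmetric bilinear form $B$ satisfying $Q(v)=B(v,v)$; it is assumed throughout that the scale of $L$ (the fractional ideal generated by $\{B(x,y):x,y\in L\}$) equals $\mathbb{Z}$. $L$ is positive definite if $Q(v)>0$ for all nonzero $v\in L$. $Q(L)=\{Q(v):v\in L\}$. For a prime $p$, $L_p=\mathbb{Z}_p\otimes L$. $\operatorname{gen}L$ is the genus of $L$ and $Q(\operatorname{gen}L)=\{a\in\mathbb{Z}: a\in Q(K)\text{ for some }K\in\operatorname{gen}L\}$, equivalently the set of integers $a$ with $a\in Q(L_p)$ for all primes $p$. For positive integers $a<m$, $\mathcal{A}_{a,m}=\{a+mx : x\in\mathbb{Z},\ x\geq 0\}$, and $\mathcal{A}_{a,m}$ is admissible if $\operatorname{ord}_p a<\operatorname{ord}_p m$ for every prime $p\mid m$. *)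

From mathcomp Require Import all_boot all_order all_algebra.
Set Implicit Arguments. Unset Strict Implicit. Unset Printing Implicit Defensive.
Import Order.TTheory GRing.Theory Num.Theory.
Local Open Scope ring_scope.

(* A lattice L of rank n is given by its Gram matrix G : 'M[int]_n with respect
   to a Z-basis e_1..e_n, i.e. G i j = B(e_i, e_j).  Since the scale of L is Z, all B(x,y) are
   integers, so G has integer entries. *)

Definition bil (n : nat) (G : 'M[int]_n) (x y : 'cV[int]_n) : int :=
  (x^T *m G *m y) ord0 ord0.

Definition qf (n : nat) (G : 'M[int]_n) (v : 'cV[int]_n) : int := bil G v v.

Definition symmetric_gram (n : nat) (G : 'M[int]_n) : Prop := G^T = G.

Definition pos_def (n : nat) (G : 'M[int]_n) : Prop :=
  forall v : 'cV[int]_n, v != 0 -> 0 < qf G v.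

(* scale L = Z: the ideal generated by {B(x,y) : x,y in L} is Z, i.e. (all
   values are integers, and) the only common divisors of all B(x,y) are units. *)
Definition scale_Z (n : nat) (G : 'M[int]_n) : Prop :=
  forall d : int, (forall x y : 'cV[int]_n, (d %| bil G x y)%Z) -> (d %| 1)%Z.

(* p-adic integers, as the inverse limit of Z/p^k Z: a p-adic integer vector
   is a sequence (x_k)_k of integer vectors with x_{k+1} = x_k mod p^k
   (componentwise).  It is a representation of a in L_p = Z_p (x) L if
   Q(x) = a in Z_p, i.e. Q(x_k) = a mod p^k for every k. *)
Definition padic_coherent (n p : nat) (x : nat -> 'cV[int]_n) : Prop :=
  forall k (i : 'I_n), (x k.+1 i ord0 == x k i ord0 %[mod (p ^ k)%:Z])%Z.

Definition rep_local (n : nat) (G : 'M[int]_n) (p : nat) (a : int) : Prop :=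
  exists x : nat -> 'cV[int]_n,
    padic_coherent p x /\ forall k, (qf G (x k) == a %[mod (p ^ k)%:Z])%Z.

Definition rep_genus (n : nat) (G : 'M[int]_n) (a : int) : Prop :=
  forall p : nat, prime p -> rep_local G p a.

Definition rep_global (n : nat) (G : 'M[int]_n) (a : int) : Prop :=
  exists v : 'cV[int]_n, qf G v = a.

Definition AP (a m : nat) : nat -> Prop := fun t => exists x : nat, t = (a + m * x)%N.

Definition admissible (a m : nat) : Prop :=
  (0 < a)%N /\ (a < m)%N /\
  forall p : nat, prime p -> (p %| m)%N -> (logn p a < logn p m)%N.

From mathcomp Require Import all_boot all_order all_algebra.
From mathcomp Require Import ring zify.
Set Implicit Arguments. Unset Strict Implicit. Unset Printing Implicit Defensive.
Import Order.TTheory GRing.Theory Num.Theory.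
Local Open Scope ring_scope.

(* Local representations of [a] modulo the prime-power factors of [m] are
   glued by the Chinese remainder theorem into one vector [v] of [L] with
   [Q(v) = a mod m]; as [Q(v) >= 0] and [0 < a < m], [Q(v)] lies in the
   progression. *)

Section QuadraticCongruences.

Variables (n : nat) (G : 'M[int]_n).

Lemma qf_addZ (w z : 'cV[int]_n) (d : int) :
  qf G (w + d *: z) = qf G w + d * (bil G z w + bil G w z + d * qf G z).
Proof.
rewrite /qf /bil.
have -> : (w + d *: z)^T = w^T + d *: z^T by apply/matrixP => i j; rewrite !mxE.
rewrite !mulmxDl !mulmxDr -!scalemxAl -!scalemxAr scalerA !mxE; ring.
Qed.

Lemma qf_addZ_congr (d a : int) (w z : 'cV[int]_n) :
  (d %| qf G w - a)%Z -> (d %| qf G (w + d *: z) - a)%Z.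
Proof. by move=> dw; rewrite qf_addZ addrAC rpredD // dvdz_mulr. Qed.

(* Moving [v1] by a multiple of [r] and [v2] by a multiple of [s] can reach the
   same vector, because [r u + s w = 1]. *)
Lemma qf_congr_coprime_mul (r s a : int) (v1 v2 : 'cV[int]_n) :
  coprimez r s -> (r %| qf G v1 - a)%Z -> (s %| qf G v2 - a)%Z ->
  exists v, (r * s %| qf G v - a)%Z.
Proof.
move=> crs rv1 sv2; have [u [w Huw]] := Bezoutz r s.
move: Huw; rewrite (eqP crs) => Huw.
exists (v1 + r *: (u *: (v2 - v1))); rewrite Gauss_dvdz //.
rewrite qf_addZ_congr //=.
have -> : v1 + r *: (u *: (v2 - v1)) = v2 + s *: (- w *: (v2 - v1)).
  apply/matrixP => i j; rewrite !mxE; apply/eqP; rewrite -subr_eq0.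
  set x1 := v1 i j; set x2 := v2 i j.
  have -> : x1 + r * (u * (x2 - x1)) - (x2 + s * (- w * (x2 - x1))) =
            (u * r + w * s - 1) * (x2 - x1) by ring.
  by rewrite Huw subrr mul0r.
by rewrite qf_addZ_congr.
Qed.

Lemma qf_congr_of_rep_local p a k :
  rep_local G p a -> exists v, ((p ^ k)%N%:Z %| qf G v - a)%Z.
Proof. by case=> x [_ Hx]; exists (x k); rewrite -eqz_mod_dvd Hx. Qed.

Lemma qf_congr_of_rep_local_primes (a : int) (d : nat) :
  (0 < d)%N -> (forall p, prime p -> (p %| d)%N -> rep_local G p a) ->
  exists v, (d%:Z %| qf G v - a)%Z.
Proof.
elim/ltn_ind: d => d IH d_gt0 loc_d.
have [d_gt1|d_le1] := ltnP 1 d; last first.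
  by exists 0; have -> : d = 1%N by lia.
have p_pr := pdiv_prime d_gt1; set p := pdiv d in p_pr.
have p_d : (p %| d)%N by exact: pdiv_dvd.
have [d' p_d' dE] := pfactor_coprime p_pr d_gt0; set e := logn p d in dE.
have e_gt0 : (0 < e)%N by rewrite logn_gt0 mem_primes p_pr d_gt0.
have d'_gt0 : (0 < d')%N by move: d_gt0; rewrite dE muln_gt0 => /andP[].
have pe_gt1 : (1 < p ^ e)%N by rewrite -(expn0 p) ltn_exp2l ?prime_gt1.
have [v' Hv'] : exists v, (d'%:Z %| qf G v - a)%Z.
  apply: IH => [||q q_pr q_d']; rewrite ?dE ?ltn_Pmulr //.
  by apply: loc_d; rewrite // dE dvdn_mulr.
have [v Hv] := qf_congr_of_rep_local e (loc_d p p_pr p_d).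
have cop : coprimez (p ^ e)%N%:Z d'%:Z by rewrite coprimezE coprime_pexpl.
have [w Hw] := qf_congr_coprime_mul cop Hv Hv'.
by exists w; rewrite dE PoszM mulrC.
Qed.

Lemma qf_ge0 (v : 'cV[int]_n) : pos_def G -> 0 <= qf G v.
Proof.
move=> G_pos; have [->|v_nz] := eqVneq v 0; last exact: ltW (G_pos v v_nz).
by rewrite /qf /bil mulmx0 mxE.
Qed.

End QuadraticCongruences.

Lemma AP_mod (a m t : nat) : (a < m)%N -> t = a %[mod m] -> AP a m t.
Proof.
move=> a_lt_m tE; exists (t %/ m)%N.
by rewrite {1}(divn_eq t m) tE modn_small // addnC mulnC.
Qed.

Theorem lemma1 (n : nat) (G : 'M[int]_n) (a m : nat) :
  symmetric_gram G -> pos_def G -> scale_Z G -> (4 <= n)%N ->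
  admissible a m ->
  (forall t : nat, AP a m t -> rep_genus G t%:Z) ->
  exists t : nat, AP a m t /\ rep_global G t%:Z.
Proof.
move=> _ G_pos _ _ [a_gt0 [a_lt_m _]] gen_AP.
have gen_a : rep_genus G a%:Z by apply: gen_AP; exists 0%N; rewrite muln0 addn0.
have [v Hv] := qf_congr_of_rep_local_primes (ltn_trans a_gt0 a_lt_m)
  (fun p p_pr _ => gen_a p p_pr).
have v_ge0 := qf_ge0 v G_pos.
exists `|qf G v|%N; split; last by exists v; rewrite gez0_abs.
apply: AP_mod => //; move: Hv.
by rewrite -eqz_mod_dvd -{1}(gez0_abs v_ge0) !modz_nat => /eqP[].
Qed.
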